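(* Let $a=(a_i)_{i\in\mathbb Z}$ be any sequence of complex numbers and $\widehat a$ its dual sequence. Then, with $H(u)=1+\sum_{k\ge1}h_ku^{-k}$ and $E(v)=1+\sum_{k\ge1}e_kv^{-k}$, $$1+(u+v)\sum_{p,q=0}^\infty\frac{s_{(p\mid q);a}}{(u-a_1)\cdots(u-a_{p+1})(v-\widehat a_1)\cdots(v-\widehat a_{q+1})}=H(u)E(v),$$ where $(p\mid q)$ is the hook diagram with Frobenius coordinates $p,q$ (i.e. the partition $(p+1,1^q)$), and both sides are regarded as formal series in $u^{-1},v^{-1}$ with coefficients in $\Lambda$.
   Context: $\Lambda$ is the algebra of symmetric functions over $\mathbb C$ with complete homogeneous $h_k$ and elementary $e_k$. For a sequence $a=(a_i)_{i\in\mathbb Z}$ define $h_{k;a}=\sum_{i=1}^k(-1)^{k-i}e_{k-i}(a_1,\dots,a_{k-1})h_i$ for $k\ge1$, $h_{0;a}=1$, $h_{k;a}=0$ for $k<0$; let $(\tau^ra)_i=a_{i+r}$; and set $s_{\mu;a}=\det[h_{\mu_i-i+j;\,\tau^{1-j}a}]_{i,j=1}^N$ for any $N\ge\ell(\mu)$. The dual sequence is $\widehat a_i=-a_{1-i}$. *)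

(* Lambda (symmetric functions over C) is realised, for each
   number n of variables, inside the polynomial ring {mpoly C[n]}; C = R[i]
   for R : realType (the complex numbers). *)
From HB Require Import structures.
From mathcomp Require Import all_boot all_order all_algebra.
From mathcomp Require Import reals.
From mathcomp.real_closed Require Import complex.
From mathcomp Require Import mpoly.
Set Implicit Arguments. Unset Strict Implicit. Unset Printing Implicit Defensive.
Import GRing.Theory Num.Theory.
Local Open Scope ring_scope.

Section Defs.
Variable R : realType.
Local Notation C := (R[i]).
Variable n : nat.
Local Notation Lam := {mpoly C[n]}.

Definition hsym (k : nat) : Lam :=
  \sum_(m : 'X_{1..n < k.+1} | mdeg m == k) 'X_[m].

Definition esym (k : nat) : Lam := mesym n C k.

Definition escal (s : seq C) (j : nat) : C :=
  \sum_(I : {set 'I_(size s)} | #|I| == j) \prod_(i in I) s`_i.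

Definition hA (a : int -> C) (k : int) : Lam :=
  match k with
  | Posz 0 => 1
  | Posz k'.+1 =>
      \sum_(1 <= i < k'.+2)
        ((-1) ^+ (k'.+1 - i) * escal [seq a (Posz j) | j <- iota 1 k'] (k'.+1 - i))
          *: hsym i
  | Negz _ => 0
  end.

Definition tau (r : int) (a : int -> C) : int -> C := fun i => a (i + r).

Definition dual (a : int -> C) : int -> C := fun i => - a (1 - i).

(* s_{mu;a} = det [h_{mu_i - i + j; tau^{1-j} a}]_{i,j=1..N}, with N = l(mu)
   (mu given by its list of positive parts, so N = size mu) *)
Definition schurA (a : int -> C) (mu : seq nat) : Lam :=
  \det (\matrix_(i < size mu, j < size mu)
          hA (tau (1 - (j.+1)%:Z) a)
             ((nth 0%N mu i)%:Z - (i.+1)%:Z + (j.+1)%:Z)).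

Definition hook (p q : nat) : seq nat := p.+1 :: nseq q 1%N.

(* Formal series in u^{-1} with scalar coefficients: f k = coefficient of u^{-k}. *)
Definition invlin (c : C) (k : nat) : C := if k is k'.+1 then c ^+ k' else 0.
  (* 1/(u - c) = sum_{k>=0} c^k u^{-(k+1)} *)
Definition sermul (f g : nat -> C) (k : nat) : C :=
  \sum_(i < k.+1) f i * g (k - i)%N.
Definition invprod (s : seq C) : nat -> C :=
  foldr (fun c f => sermul (invlin c) f) (fun k => (k == 0%N)%:R) s.

(* S = sum_{p,q>=0} s_{(p|q);a} / ((u-a_1)..(u-a_{p+1}) (v-ahat_1)..(v-ahat_{q+1}));
   coefficient of u^{-M} v^{-N}.  Only p <= M, q <= N contribute (the
   expansion of the p-th term starts at u^{-(p+1)}), so the sum is finite. *)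
Definition Scoef (a : int -> C) (M N : nat) : Lam :=
  \sum_(p < M.+1) \sum_(q < N.+1)
     (invprod [seq a (Posz k) | k <- iota 1 p.+1] M
      * invprod [seq dual a (Posz k) | k <- iota 1 q.+1] N) *: schurA a (hook p q).

(* coefficient of u^{-M} v^{-N} (M N : int) of S (zero for positive powers) *)
Definition SZ (a : int -> C) (M N : int) : Lam :=
  match M, N with Posz m, Posz k => Scoef a m k | _, _ => 0 end.

(* coefficient of u^{-M} v^{-N} of  1 + (u + v) S *)
Definition lhs_coef (a : int -> C) (M N : int) : Lam :=
  ((M == 0) && (N == 0))%:R + SZ a (M + 1) N + SZ a M (N + 1).

Definition Hcoef (M : int) : Lam :=
  match M with Posz 0 => 1 | Posz k => hsym k | Negz _ => 0 end.
Definition Ecoef (N : int) : Lam :=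
  match N with Posz 0 => 1 | Posz k => esym k | Negz _ => 0 end.

End Defs.

From Pilot Require Import Defs.
From HB Require Import structures.
From mathcomp Require Import all_boot all_order all_algebra.
From mathcomp Require Import reals.
From mathcomp.real_closed Require Import complex.
From mathcomp Require Import mpoly sesquilinear.
From mathcomp Require Import zify.
From Stdlib Require Import FunctionalExtensionality.
Import GRing.Theory Num.Theory.
Local Open Scope ring_scope.

Set Implicit Arguments. Unset Strict Implicit. Unset Printing Implicit Defensive.

(* The hook Schur functions s_(i|j) = sum_l (-1)^l h_(i-l) e_(j+l+1) satisfy
   s_(i+1|j) + s_(i|j+1) = h_(i+1) e_(j+1), s_(0|j) = e_(j+1), s_(i|0) = h_(i+1),
   the last one being the relation H(t) E(-t) = 1.  Let Theta be the bilinear form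
   on C[X] with Theta(X^i, X^j) = s_(i|j).  Expanding the Jacobi-Trudi determinant
   of s_((p|q);a) along its first column and comparing with
   Theta((X-c) f, g) + Theta(f, (X+c) g) = Phi(f) Psi(g),
   where Phi(X^i) = h_(i+1) and Psi(X^j) = e_(j+1), one gets by induction on q
   s_((p|q);a) = Theta((X-a_1)...(X-a_p), (X-ahat_1)...(X-ahat_q)).
   The coefficients of u^(-M) in 1/((u-a_1)...(u-a_(p+1))) are the coordinates
   of X^(M-1) in the Newton basis (X-a_1)...(X-a_p), so by bilinearity the
   coefficient of u^(-M) v^(-N) in the double sum is s_(M-1|N-1), and the theorem
   reduces to the three relations above. *)

Lemma expand_det_col0_2rows (K : comNzRingType) m (M : 'M[K]_m.+2) :
  (forall i : 'I_m, M (lift ord0 (lift ord0 i)) ord0 = 0) ->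
  \det M = M ord0 ord0 * \det (row' ord0 (col' ord0 M))
           - M (lift ord0 ord0) ord0 * \det (row' (lift ord0 ord0) (col' ord0 M)).
Proof.
move=> M_col0; rewrite (expand_det_col _ ord0) !big_ord_recl big1 => [|i _]; last first.
  by rewrite M_col0 mul0r.
by rewrite /cofactor /= addr0 expr0 mul1r expr1 mulN1r mulrN.
Qed.

Section UmbralSubstitution.
Variables (K : comNzRingType) (A : algType K).
Implicit Types (x y : nat -> A) (f g : {poly K}).

Definition umbral x f : A := \sum_(i < size f) f`_i *: x i.

Lemma umbral_widen x f B : (size f <= B)%N -> umbral x f = \sum_(i < B) f`_i *: x i.
Proof.
move=> le_fB; rewrite /umbral (big_ord_widen B (fun i => f`_i *: x i) le_fB) big_mkcond.
by apply: eq_bigr => i _; case: ltnP => // /(nth_default 0) ->; rewrite scale0r.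
Qed.

Lemma umbral_is_linear x : linear (umbral x).
Proof.
move=> c f g; pose B := maxn (size f) (size g).
have le_cfg : (size (c *: f + g)%R <= B)%N.
  apply: leq_trans (size_polyD _ _) _.
  by rewrite geq_max leq_maxr (leq_trans (size_scale_leq _ _)) ?leq_maxl.
rewrite (umbral_widen x le_cfg) (umbral_widen x (leq_maxl (size f) (size g))).
rewrite (umbral_widen x (leq_maxr (size f) (size g))) scaler_sumr -big_split.
by apply: eq_bigr => i _; rewrite coefD coefZ scalerDl scalerA.
Qed.

HB.instance Definition _ x :=
  GRing.isLinear.Build K {poly K} A *:%R (umbral x) (umbral_is_linear x).

Lemma umbralXn x k : umbral x 'X^k = x k.
Proof.
rewrite /umbral size_polyXn big_ord_recr /= coefXn eqxx scale1r big1 ?add0r //.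
by move=> i _; rewrite coefXn ltn_eqF ?scale0r.
Qed.

Lemma umbral1 x : umbral x 1 = x 0.
Proof. by rewrite -umbralXn expr0. Qed.

Lemma umbral_mulX x f : umbral x ('X * f) = umbral (fun i => x i.+1) f.
Proof.
have le_Xf : (size ('X * f)%R <= (size f).+1)%N.
  by apply: leq_trans (size_polyMleq _ _) _; rewrite size_polyX.
rewrite (umbral_widen x le_Xf) big_ord_recl /= coefXM scale0r add0r.
by apply: eq_bigr => i _; rewrite coefXM.
Qed.

Lemma umbralDl x y f : umbral (fun i => x i + y i) f = umbral x f + umbral y f.
Proof. by rewrite -big_split; apply: eq_bigr => i _; rewrite scalerDr. Qed.

Lemma umbralM x y f g :
  umbral x f * umbral y g = umbral (fun i => umbral (fun j => x i * y j) g) f.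
Proof.
rewrite mulr_suml; apply: eq_bigr => i _; rewrite -scalerAl mulr_sumr.
by congr (_ *: _); apply: eq_bigr => j _; rewrite scalerAr.
Qed.

Lemma umbral_swap (z : nat -> nat -> A) f g :
  umbral (fun i => umbral (z i) g) f = umbral (fun j => umbral (z^~ j) f) g.
Proof.
rewrite /umbral; under eq_bigr do rewrite scaler_sumr.
rewrite exchange_big; apply: eq_bigr => j _; rewrite scaler_sumr.
by apply: eq_bigr => i _; rewrite !scalerA mulrC.
Qed.

End UmbralSubstitution.

Section HookExpansion.
Variables (R : realType) (n : nat).
Local Notation C := R[i].
Local Notation Lam := {mpoly C[n]}.
Local Notation hs := (Defs.hsym R n).
Local Notation es := (Defs.esym R n).
Implicit Types (f g : {poly C}).

Lemma mcoeff_hsymMX k (mu al : 'X_{1..n}) :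
  (hs k * 'X_[mu])@_al = ((mu <= al)%MM && (mdeg al == k + mdeg mu)%N)%:R.
Proof.
rewrite /Defs.hsym mulr_suml raddf_sum /=.
under eq_bigr => m _ do rewrite -mpolyXD mcoeffX.
have [/andP[mu_le_al /eqP deg_al]|] := boolP ((mu <= al)%MM && _); last first.
  rewrite negb_and => /orP bad; rewrite big1 // => m /eqP deg_m.
  case: eqP => // al_eq; case: bad; rewrite -al_eq ?lem_addl // mdegD deg_m.
  by rewrite eqxx.
have deg_diff : mdeg (al - mu)%MM = k.
  by apply/eqP; rewrite -(eqn_add2r (mdeg mu)) -mdegD submK // deg_al.
have lt_k : (mdeg (al - mu)%MM < k.+1)%N by rewrite deg_diff.
rewrite (bigD1 (BMultinom lt_k)) /=; last by rewrite deg_diff.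
rewrite submK // eqxx big1 ?addr0 // => m /andP[_ m_neq].
case: eqP => // al_eq; case/eqP: m_neq; apply: val_inj => /=.
by rewrite -al_eq addmK.
Qed.

Lemma hsym0 : hs 0 = 1.
Proof.
apply/mpolyP => al; rewrite -[hs 0]mulr1 -mpolyX0 mcoeff_hsymMX mcoeffX.
rewrite mdeg0 addn0 mdeg_eq0 eq_sym andb_idl // => _.
by apply/mnm_lepP => i; rewrite mnm0E.
Qed.

Lemma sum_sign_mesym1_le (al : 'X_{1..n}) : al != 0%MM ->
  \sum_(h : {set 'I_n} | (mesym1 h <= al)%MM) (-1) ^+ #|h| = 0 :> C.
Proof.
move=> al_neq0.
have [i0 al_i0] : exists i0, (0 < al i0)%N.
  apply/existsP; apply: contraR al_neq0 => /existsPn al0.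
  by apply/eqP/mnmP => i; rewrite mnm0E; apply/eqP; rewrite -leqn0 leqNgt al0.
pose sgn i : C := - (0 < al i)%N%:R.
have -> : \sum_(h : {set 'I_n} | (mesym1 h <= al)%MM) (-1) ^+ #|h| =
          \prod_(i < n) (sgn i + 1).
  rewrite bigA_distr big_mkcond /=; apply: eq_bigr => h _.
  rewrite -big_mkcond /= /sgn prodrN.
  case: (pickP (fun i => (i \in h) && (al i == 0%N))) => [i /andP[i_h /eqP al_i]|al_pos].
    have /negbTE -> : ~~ (mesym1 h <= al)%MM.
      by apply/mnm_lepP => /(_ i); rewrite mnmE i_h al_i.
    by rewrite (bigD1 i) //= al_i mul0r mulr0.
  have le_al i : i \in h -> (0 < al i)%N.
    by move=> i_h; have := al_pos i; rewrite i_h lt0n /= => ->.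
  have -> : (mesym1 h <= al)%MM.
    by apply/mnm_lepP => i; rewrite mnmE; case: (boolP (i \in h)) => // /le_al.
  by rewrite big1 ?mulr1 // => i /le_al ->.
by rewrite (bigD1 i0) //= /sgn al_i0 addNr mul0r.
Qed.

Lemma sum_signed_hsym_esym m : (0 < m)%N ->
  \sum_(j < m.+1) (-1) ^+ j *: (hs (m - j) * es j) = 0.
Proof.
move=> m_gt0; apply/mpolyP => al; rewrite mcoeff0 raddf_sum /=.
under eq_bigr => j _ do rewrite mcoeffZ /Defs.esym mesymE mulr_sumr raddf_sum mulr_sumr.
pose G (h : {set 'I_n}) : C :=
  if (mesym1 h <= al)%MM && (mdeg al == m) then (-1) ^+ #|h| else 0.
have termE (j : 'I_m.+1) (h : {set 'I_n}) : #|h| == j ->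
    (-1) ^+ j * (hs (m - j) * 'X_[mesym1 h])@_al = G h.
  move=> /eqP card_h; have j_le : (j <= m)%N by rewrite -ltnS.
  by rewrite /G mcoeff_hsymMX mdeg_mesym1 card_h subnK // mulr_natr mulrb.
rewrite (eq_bigr (fun j : 'I_m.+1 => \sum_(h : {set 'I_n} | #|h| == j) G h)); last first.
  by move=> j _; apply: eq_bigr; exact: termE.
under eq_bigr do rewrite big_mkcond.
rewrite exchange_big.
have collapse (h : {set 'I_n}) :
    \sum_(j < m.+1) (if #|h| == j then G h else 0) = if (#|h| < m.+1)%N then G h else 0.
  rewrite -big_mkcond (eq_bigl (fun j : 'I_m.+1 => j == #|h| :> nat)) => [|j].
    exact: (big_ord1_eq _ (fun _ => G h)).
  exact: eq_sym.
under eq_bigr do rewrite collapse.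
have [deg_al|deg_al] := eqVneq (mdeg al) m; last first.
  by rewrite big1 // => h _; rewrite /G (negbTE deg_al) andbF !if_same.
rewrite (eq_bigr G) => [|h _]; last first.
  case: ltnP => // card_gt; rewrite /G; case: ifP => // /andP[le_al _].
  have := mdegD (al - mesym1 h) (mesym1 h); rewrite submK // mdeg_mesym1 deg_al.
  by move=> deg_eq; move: card_gt; rewrite deg_eq ltnNge leq_addl.
rewrite /G deg_al eqxx; under eq_bigr do rewrite andbT.
by rewrite -big_mkcond sum_sign_mesym1_le // -mdeg_eq0 deg_al -lt0n.
Qed.

Definition hook_schur i j : Lam :=
  \sum_(l < i.+1) (-1) ^+ l *: (hs (i - l) * es (j + l).+1).

Lemma hook_schur0l j : hook_schur 0 j = es j.+1.
Proof. by rewrite /hook_schur big_ord1 hsym0 mul1r scale1r addn0. Qed.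

Lemma hook_schur0r i : hook_schur i 0 = hs i.+1.
Proof.
have := sum_signed_hsym_esym (ltn0Sn i).
rewrite big_ord_recl [es 0]mesym0E mulr1 scale1r subn0 => /eqP.
rewrite addr_eq0 => /eqP ->; rewrite -sumrN; apply: eq_bigr => l _.
by rewrite exprS mulN1r scaleNr opprK subSS add0n.
Qed.

Lemma hook_schurS i j : hook_schur i.+1 j + hook_schur i j.+1 = hs i.+1 * es j.+1.
Proof.
rewrite /hook_schur big_ord_recl expr0 scale1r subn0 addn0 -addrA -[RHS]addr0.
congr (_ + _); rewrite -big_split big1 // => l _.
by rewrite subSS exprS mulN1r scaleNr addnS addSn; apply: addNr.
Qed.


Definition hook_form f g : Lam := umbral (fun i => umbral (hook_schur i) g) f.
Definition hform f : Lam := umbral (fun i => hs i.+1) f.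
Definition eform g : Lam := umbral (fun j => es j.+1) g.

Lemma hook_formE f g : hook_form f g = umbral (fun j => umbral (hook_schur^~ j) f) g.
Proof. exact: umbral_swap. Qed.

Lemma hook_form_is_bilinear : bilinear_for *:%R *:%R hook_form.
Proof.
split=> [g | f] c u v; first exact: linearP.
by rewrite !hook_formE linearP.
Qed.

HB.instance Definition _ :=
  bilinear_isBilinear.Build C {poly C} {poly C} Lam *:%R *:%R hook_form
    hook_form_is_bilinear.

Lemma hook_formXn i j : hook_form 'X^i 'X^j = hook_schur i j.
Proof. by rewrite /hook_form !umbralXn. Qed.

Lemma hook_form1l g : hook_form 1 g = eform g.
Proof. by rewrite /hook_form umbral1; apply: eq_bigr => j _; rewrite hook_schur0l. Qed.

Lemma hook_form1r f : hook_form f 1 = hform f.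
Proof. by apply: eq_bigr => i _; rewrite umbral1 hook_schur0r. Qed.

Lemma hook_form_mulX f g :
  hook_form ('X * f) g + hook_form f ('X * g) = hform f * eform g.
Proof.
rewrite /hook_form umbral_mulX -umbralDl umbralM; apply: eq_bigr => i _.
by congr (_ *: _); rewrite umbral_mulX -umbralDl; apply: eq_bigr => j _; rewrite hook_schurS.
Qed.

Lemma hook_form_shift (c : C) f g :
  hook_form (('X - c%:P) * f) g + hook_form f (('X + c%:P) * g) = hform f * eform g.
Proof.
rewrite mulrBl mulrDl !mul_polyC linearBl linearDr linearZl_LR linearZr_LR.
by rewrite addrACA addNr addr0 hook_form_mulX.
Qed.

Lemma tau0 (a : int -> C) : tau 0 a = a.
Proof. by apply: functional_extensionality => k; rewrite /tau addr0. Qed.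

Lemma tau_tau r s (a : int -> C) : tau r (tau s a) = tau (r + s) a.
Proof. by apply: functional_extensionality => k; rewrite /tau addrA. Qed.

Lemma tau_dual (a : int -> C) : tau 1 (dual a) = dual (tau (-1) a).
Proof. by apply: functional_extensionality => k; rewrite /tau /dual; congr (- a _); lia. Qed.

Definition aseq (a : int -> C) p : seq C := [seq a (Posz k) | k <- iota 1 p].

Definition fpoly (a : int -> C) p : {poly C} := \prod_(c <- aseq a p) ('X - c%:P).

Lemma aseqS a p : aseq a p.+1 = a 1 :: aseq (tau 1 a) p.
Proof.
rewrite /aseq /= (iotaDl 1 1 p) -map_comp; congr (_ :: _); apply: eq_map => k /=.
by rewrite /tau addrC.
Qed.

Lemma fpoly0 a : fpoly a 0 = 1.
Proof. exact: big_nil. Qed.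

Lemma fpolyS a p : fpoly a p.+1 = ('X - (a 1)%:P) * fpoly (tau 1 a) p.
Proof. by rewrite /fpoly aseqS big_cons. Qed.

Lemma size_fpoly a p : size (fpoly a p) = p.+1.
Proof. by rewrite size_prod_XsubC size_map size_iota. Qed.

Lemma hA_fpoly a k : hA n a k.+1 = hform (fpoly a k).
Proof.
have size_aseq : size (aseq a k) = k by rewrite size_map size_iota.
rewrite /hform /umbral size_fpoly /= big_add1 big_mkord; apply: eq_bigr => i _.
have le_ik : (i <= size (aseq a k))%N by rewrite size_aseq -ltnS.
by rewrite coef_prod_XsubC // /escal subSS size_aseq.
Qed.

Definition jacobi_trudi_mx (a : int -> C) (la : nat -> nat) m : 'M[Lam]_m :=
  \matrix_(i < m, j < m) hA n (tau (- j%:Z) a) ((la i)%:Z - i%:Z + j%:Z).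

Definition jacobi_trudi a la m : Lam := \det (jacobi_trudi_mx a la m).

Lemma schurA_jacobi_trudi a mu : schurA n a mu = jacobi_trudi a (nth 0%N mu) (size mu).
Proof.
rewrite /schurA /jacobi_trudi; congr (\det _); apply/matrixP => i j; rewrite !mxE.
by congr (hA n _ _); [congr (tau _ a)|]; lia.
Qed.

Lemma eq_jacobi_trudi a (la la' : nat -> nat) m :
  (forall i, (i < m)%N -> la i = la' i) -> jacobi_trudi a la m = jacobi_trudi a la' m.
Proof.
move=> eq_la; rewrite /jacobi_trudi; congr (\det _); apply/matrixP => i j.
by rewrite !mxE eq_la.
Qed.

Definition hook_rows p i : nat := if i is 0 then p.+1 else 1.

Lemma schurA_hook a p q : schurA n a (hook p q) = jacobi_trudi a (hook_rows p) q.+1.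
Proof.
rewrite schurA_jacobi_trudi /= size_nseq; apply: eq_jacobi_trudi => -[|i] //= lt_iq.
by rewrite nth_nseq -ltnS lt_iq.
Qed.

Lemma jacobi_trudi_hook1 a p : jacobi_trudi a (hook_rows p) 1 = hA n a p.+1.
Proof.
rewrite /jacobi_trudi det_mx11 mxE; congr (hA n _ _); last by rewrite /=; lia.
by rewrite -[RHS]tau0; congr (tau _ a); rewrite /=; lia.
Qed.

Lemma hA_neg (a : int -> C) k : k < 0 -> hA n a k = 0.
Proof. by case: k. Qed.

Lemma jacobi_trudi_hookS a p q :
  jacobi_trudi a (hook_rows p) q.+2 =
  hA n a p.+1 * jacobi_trudi (tau (-1) a) (hook_rows 0) q.+1 - jacobi_trudi (tau (-1) a) (hook_rows p.+1) q.+1.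
Proof.
have A00 : jacobi_trudi_mx a (hook_rows p) q.+2 ord0 ord0 = hA n a p.+1.
  rewrite mxE; congr (hA n _ _); last by rewrite /=; lia.
  by rewrite -[RHS]tau0; congr (tau _ a); rewrite /=; lia.
have A10 : jacobi_trudi_mx a (hook_rows p) q.+2 (lift ord0 ord0) ord0 = 1.
  by rewrite mxE (_ : _ - _ + _ = 0) //= /bump /=; lia.
have A0 : row' ord0 (col' ord0 (jacobi_trudi_mx a (hook_rows p) q.+2)) = jacobi_trudi_mx (tau (-1) a) (hook_rows 0) q.+1.
  apply/matrixP => i j; rewrite !mxE tau_tau !lift0.
  by congr (hA n _ _); [congr (tau _ a)|case: i => -[|i] _ /=]; lia.
have A1 : row' (lift ord0 ord0) (col' ord0 (jacobi_trudi_mx a (hook_rows p) q.+2)) =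
    jacobi_trudi_mx (tau (-1) a) (hook_rows p.+1) q.+1.
  apply/matrixP => i j; rewrite !mxE tau_tau !lift0.
  by congr (hA n _ _); [congr (tau _ a)|case: i => -[|i] _ /=; rewrite /bump /=]; lia.
rewrite /jacobi_trudi expand_det_col0_2rows => [|i]; last by rewrite mxE hA_neg.
by rewrite A00 A10 A0 A1 [X in _ - X]mul1r.
Qed.

Lemma fpoly_shiftS a p : fpoly (tau (-1) a) p.+1 = ('X - (a 0)%:P) * fpoly a p.
Proof. by rewrite fpolyS tau_tau addrN tau0 /tau addrN. Qed.

Lemma fpoly_dualS a q : fpoly (dual a) q.+1 = ('X + (a 0)%:P) * fpoly (dual (tau (-1) a)) q.
Proof. by rewrite fpolyS tau_dual /dual subrr polyCN opprK. Qed.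

Lemma jacobi_trudi_hook_form a p q :
  jacobi_trudi a (hook_rows p) q.+1 = hook_form (fpoly a p) (fpoly (dual a) q).
Proof.
elim: q a p => [|q IH] a p; first by rewrite jacobi_trudi_hook1 fpoly0 hook_form1r hA_fpoly.
rewrite jacobi_trudi_hookS !IH fpoly0 hook_form1l hA_fpoly fpoly_shiftS fpoly_dualS.
by rewrite -(hook_form_shift (a 0)) addrAC subrr add0r.
Qed.

Lemma invprod_cons0 (c : C) l : invprod (c :: l) 0 = 0.
Proof. by rewrite /= /sermul big_ord1 mul0r. Qed.

Lemma invprod_consS (c : C) l M :
  invprod (c :: l) M.+1 = invprod l M + c * invprod (c :: l) M.
Proof.
rewrite /= /sermul big_ord_recl mul0r add0r [in RHS]big_ord_recl mul0r add0r.
rewrite big_ord_recl mul1r subn1 mulr_sumr; congr (_ + _).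
by apply: eq_bigr => i _; rewrite mulrA; congr (_ * _); exact: exprS.
Qed.

Lemma sum_invprod_fpoly a M K : (M <= K)%N ->
  \sum_(p < K) invprod (aseq a p.+1) M *: fpoly a p = if M is M'.+1 then 'X^M' else 0.
Proof.
elim: M K a => [|M IH] K a le_MK.
  by rewrite big1 // => p _; rewrite aseqS invprod_cons0 scale0r.
case: K le_MK => // K le_MK.
under eq_bigr do rewrite aseqS invprod_consS scalerDl -scalerA -aseqS.
rewrite big_split -scaler_sumr (IH _ _ (ltnW le_MK)) big_ord_recl.
under eq_bigr do rewrite fpolyS scalerAr.
rewrite -mulr_sumr (IH _ _ le_MK) fpoly0.
case: M {IH le_MK} => [|M]; rewrite /= ?scaler0 ?mulr0 ?addr0.
  by rewrite scale1r.
by rewrite scale0r add0r exprS mulrBl mul_polyC addrNK.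
Qed.

Lemma Scoef_hook_form a M N :
  Scoef n a M N =
  hook_form (if M is M'.+1 then 'X^M' else 0) (if N is N'.+1 then 'X^N' else 0).
Proof.
rewrite -(sum_invprod_fpoly a (leqnSn M)) -(sum_invprod_fpoly (dual a) (leqnSn N)).
rewrite linear_sumlz; apply: eq_bigr => p _; rewrite linear_sumr; apply: eq_bigr => q _.
by rewrite linearZl_LR linearZr_LR -scalerA schurA_hook jacobi_trudi_hook_form.
Qed.

Lemma SZ_hook_schur (a : int -> C) M N : SZ n a M.+1 N.+1 = hook_schur M N.
Proof. exact: etrans (Scoef_hook_form a M.+1 N.+1) (hook_formXn M N). Qed.

Lemma SZ_nonpos (a : int -> C) (M N : int) : (M <= 0) || (N <= 0) -> SZ n a M N = 0.
Proof.
case: M N => [[|M]|M] [[|N]|N] //= _; rewrite /SZ Scoef_hook_form.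
- exact: linear0l.
- exact: linear0l.
- exact: linear0r.
Qed.

End HookExpansion.

Theorem theorem6 (R : realType) (n : nat) (a : int -> R[i]) (M N : int) :
  lhs_coef n a M N = Hcoef R n M * Ecoef R n N.
Proof.
rewrite /lhs_coef; case: M => M; last by rewrite !SZ_nonpos ?addr0 ?mul0r //; lia.
case: N => N; last by rewrite !SZ_nonpos ?addr0 ?mulr0 ?andbF //; lia.
rewrite -!PoszD !addn1; case: M => [|M]; case: N => [|N].
- by rewrite !SZ_nonpos // addr0 addr0 mulr1.
- by rewrite SZ_hook_schur [SZ _ _ _ _]SZ_nonpos // addr0 add0r mul1r hook_schur0l.
- by rewrite SZ_hook_schur [SZ _ _ _ _]SZ_nonpos // addr0 add0r mulr1 hook_schur0r.
- by rewrite !SZ_hook_schur add0r hook_schurS.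
Qed.
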